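(* Assume $\sigma:=\sup_{g\in\mathcal G}S(g)<\infty$. For any probability measure $Q$ on $\mathcal G$, any finite Borel partition $\mathcal A$ of $\mathcal M$, and any $g,g'\in\mathcal G$, $$\bigl|\hat S_{Q,\mathcal A}(g)-\hat S_{Q,\mathcal A}(g')\bigr|\le\sigma\bigl(g(\mathcal M)+g'(\mathcal M)\bigr).$$
   Context: $\mathcal M$ is a complete separable metric space; $\mathcal G$ the finite integer-valued Borel measures on $\mathcal M$; $S:\mathcal G\to\mathbb R_+$ Borel; $n$ a positive integer. $g_A(B):=g(B\cap A)$; $X$ is the canonical random element of $\mathcal G$ and $Q[\cdot\mid X_A=g_A]$ a regular conditional distribution. $\hat S_{Q,\mathcal A}(g):=-n\sum_{A\in\mathcal A}\bigl(\log Q[e^{-S(X)/n}\mid X_A=g_A]-\log Q[e^{-S(X)/n}]\bigr)$. *)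

From HB Require Import structures.
From mathcomp Require Import all_boot all_order all_algebra.
From mathcomp Require Import all_classical all_reals all_analysis measurable_realfun.
Set Implicit Arguments. Unset Strict Implicit. Unset Printing Implicit Defensive.
Import Order.TTheory GRing.Theory Num.Theory.
Local Open Scope classical_set_scope.
Local Open Scope ring_scope.

Definition borelType (R : realType) (M : completePseudoMetricType R) :=
  g_sigma_algebraType (@open M).

Definition separable_space (T : topologicalType) :=
  exists D : set T, countable D /\ dense D.

Record gmeas d (Mb : measurableType d) (R : realType) := GMeas {
  gm :> {measure set Mb -> \bar R} ;
  gm_int : forall B, measurable B -> exists m : nat, gm B = (m%:R)%:E }.

Definition gzero d (Mb : measurableType d) (R : realType) : gmeas Mb R.
Proof.
refine (@GMeas _ _ _ (@mzero _ Mb R) _).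
by move=> B _; exists 0%N.
Defined.

HB.instance Definition _ d (Mb : measurableType d) (R : realType) :=
  gen_eqMixin (gmeas Mb R).
HB.instance Definition _ d (Mb : measurableType d) (R : realType) :=
  gen_choiceMixin (gmeas Mb R).
HB.instance Definition _ d (Mb : measurableType d) (R : realType) :=
  isPointed.Build (gmeas Mb R) (gzero Mb R).

Definition gmeas_gen d (Mb : measurableType d) (R : realType)
  : set (set (gmeas Mb R)) :=
  [set (fun g : gmeas Mb R => g B) @^-1` U |
     B in (@measurable _ Mb) & U in (@measurable _ (\bar R))].

Definition G d (Mb : measurableType d) (R : realType) :=
  g_sigma_algebraType (@gmeas_gen d Mb R).

(* Restriction g_A(B) := g(B \cap A) (A Borel; the zero measure otherwise,
   a case which never occurs below). *)
Definition restr d (Mb : measurableType d) (R : realType) (A : set Mb)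
  (g : gmeas Mb R) : gmeas Mb R.
Proof.
case: (pselect (measurable A)) => [mA|_]; last exact: gzero Mb R.
refine (@GMeas _ _ _ (mrestr g mA) _).
move=> B mB; rewrite /mrestr; apply: gm_int; exact: measurableI.
Defined.

(* Regular conditional distribution of X given X_A (X the identity on G):
   a probability kernel kappa (y |-> kappa y) on G such that
   Q[X \in B, X_A \in C] = \int_{X_A \in C} kappa (X_A g) B dQ(g). *)
Definition is_rcd d (Mb : measurableType d) (R : realType)
  (Q : probability (G Mb R) R) (A : set Mb)
  (kappa : G Mb R -> probability (G Mb R) R) :=
  (forall B : set (G Mb R), measurable B ->
     measurable_fun setT (fun y : G Mb R => kappa y B)) /\
  (forall B C : set (G Mb R), measurable B -> measurable C ->
     Q (B `&` (@restr d Mb R A) @^-1` C) =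
     (\int[Q]_(g in (@restr d Mb R A) @^-1` C) kappa (restr A g) B)%E).

Definition Eexp d (Mb : measurableType d) (R : realType)
  (P : probability (G Mb R) R) (S : G Mb R -> R) (n : nat) : R :=
  fine (\int[P]_g (expR (- (S g / n%:R)))%:E)%E.

Definition Shat d (Mb : measurableType d) (R : realType)
  (S : G Mb R -> R) (n : nat) (Q : probability (G Mb R) R)
  (k : nat) (As : 'I_k -> set Mb)
  (kappa : 'I_k -> G Mb R -> probability (G Mb R) R) (g : G Mb R) : R :=
  - n%:R * \sum_(i < k)
      (ln (Eexp (kappa i (restr (As i) g)) S n) - ln (Eexp Q S n)).

From HB Require Import structures.
From mathcomp Require Import all_boot all_order all_algebra.
From mathcomp Require Import all_classical all_reals all_analysis measurable_realfun.
From mathcomp Require Import lra.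
Set Implicit Arguments. Unset Strict Implicit. Unset Printing Implicit Defensive.
Import Order.TTheory GRing.Theory Num.Theory.
Local Open Scope classical_set_scope.
Local Open Scope ring_scope.

(* Each term of \hat S is -n log Q[e^{-S/n} | X_A = g_A], which lies in
   [0, sigma] since 0 <= S <= sigma.  If g(A) = g'(A) = 0, then g_A = g'_A and
   the terms for g and g' coincide; otherwise g(A) + g'(A) >= 1, so their
   difference is at most sigma <= sigma (g(A) + g'(A)).  Summing over the cells
   of the partition gives the bound. *)

Section MeasuresOnG.
Variables (d : measure_display) (Mb : measurableType d) (R : realType).

(* The sigma-algebra of G is generated by the evaluations g |-> g(B), so it
   cannot separate two points on which all these evaluations agree. *)
Lemma G_measurable_agree (y y' : G Mb R) :
  (forall B, measurable B -> y B = y' B) ->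
  forall E : set (G Mb R), measurable E -> (E y <-> E y').
Proof.
move=> yy' E mE.
have : smallest (sigma_algebra setT) (@gmeas_gen d Mb R) E by exact: mE.
apply: (@smallest_sub _ _ _ [set E | E y <-> E y']).
- split => //=.
  + by move=> A [yA y'A]; split=> -[_ nA]; split=> //; [move/y'A | move/yA].
  + by move=> F hF; split=> -[i _ Fi]; exists i => //; apply/(hF i).
- by move=> _ [B mB [U mU <-]] /=; rewrite yy'.
Qed.

Lemma kernel_G_agree (kappa : G Mb R -> probability (G Mb R) R) (y y' : G Mb R) :
  (forall B : set (G Mb R), measurable B ->
     measurable_fun setT (fun z : G Mb R => kappa z B)) ->
  (forall B, measurable B -> y B = y' B) ->
  forall B, measurable B -> kappa y B = kappa y' B.
Proof.
move=> mkappa yy' B mB.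
have := mkappa B mB measurableT [set kappa y B] (emeasurable_set1 _).
rewrite setTI => mE.
by have /(G_measurable_agree yy' mE) := erefl (kappa y B).
Qed.

Lemma restr_null_agree (A : set Mb) (g g' : gmeas Mb R) :
  measurable A -> g A = 0%E -> g' A = 0%E ->
  forall B, measurable B -> restr A g B = restr A g' B.
Proof.
move=> mA gA0 g'A0 B mB; rewrite /restr; case: pselect => // mA' /=.
have null (h : gmeas Mb R) : h A = 0%E -> h (B `&` A) = 0%E.
  move=> hA0; apply/eqP; rewrite eq_le measure_ge0 andbT -hA0.
  by apply: le_measure => //; rewrite inE //; exact: measurableI.
by rewrite /mrestr !null.
Qed.

Lemma fine_gmeas_partition (g : gmeas Mb R) k (As : 'I_k -> set Mb) :
  (forall i, measurable (As i)) ->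
  (forall i j, i != j -> As i `&` As j = set0) ->
  \bigcup_i As i = setT ->
  fine (g setT) = \sum_(i < k) fine (g (As i)).
Proof.
move=> mA disjA coverA.
have -> : [set: Mb] = \big[setU/set0]_(i < k) As i.
  apply/seteqP; split=> [x _|//].
  have : (\bigcup_i As i) x by rewrite coverA.
  by case=> i _ Ai; rewrite (bigD1 i) //=; left.
rewrite measure_semi_additive_ord //.
- rewrite -sum_fine // => i _.
  have [m gAi] := gm_int g (mA i).
  by have : (g (As i) \is a fin_num)%E by rewrite gAi.
- by apply/trivIsetP => i j _ _; exact: disjA.
- exact: bigsetU_measurable.
Qed.

End MeasuresOnG.

Section ExpectationBounds.
Variables (d : measure_display) (T : measurableType d) (R : realType).
Variable P : probability T R.

Lemma fine_integral_bounds (f : T -> R) (a : R) :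
  measurable_fun setT f -> 0 <= a -> (forall x, a <= f x <= 1) ->
  a <= fine (\int[P]_x (f x)%:E)%E <= 1.
Proof.
move=> mf a0 hf.
have mfE : measurable_fun setT (fun x => (f x)%:E) by exact/measurable_EFinP.
have integral_cstE (c : R) : (\int[P]_x (cst c%:E) x = c%:E)%E.
  by rewrite integral_cst // -[RHS]mule1; congr (_ * _)%E; exact: probability_setT.
have lo : (a%:E <= \int[P]_x (f x)%:E)%E.
  rewrite -integral_cstE; apply: ge0_le_integral => //.
  by move=> x _; rewrite lee_fin; case/andP: (hf x).
have hi : (\int[P]_x (f x)%:E <= 1%E)%E.
  rewrite -integral_cstE; apply: ge0_le_integral => //.
  - by move=> x _; rewrite lee_fin; case/andP: (hf x) => ax _; exact: le_trans ax.
  - by move=> x _; rewrite lee_fin; case/andP: (hf x).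
have fin : (\int[P]_x (f x)%:E)%E \is a fin_num.
  rewrite ge0_fin_numE; last by apply: le_trans lo; rewrite lee_fin.
  by apply: le_lt_trans hi _; exact: ltry.
by rewrite -!lee_fin fineK // lo hi.
Qed.

Lemma ln_expectation_expR_bounds (S : T -> R) (n : nat) (s : R) :
  measurable_fun setT S -> (0 < n)%N -> (forall x, 0 <= S x <= s) ->
  - (s / n%:R) <= ln (fine (\int[P]_x (expR (- (S x / n%:R)))%:E)%E) <= 0.
Proof.
move=> mS n0 hS.
have n0R : 0 < n%:R :> R by rewrite ltr0n.
have mexp : measurable_fun setT (fun x => expR (- (S x / n%:R))).
  apply: (measurableT_comp (@measurable_expR R)).
  exact/measurable_funN/measurable_funM.
have bounds x : expR (- (s / n%:R)) <= expR (- (S x / n%:R)) <= 1.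
  case/andP: (hS x) => S0 Ss; apply/andP; split.
    by rewrite ler_expR lerN2 ler_pM2r ?invr_gt0.
  by rewrite expR_le1 oppr_le0 divr_ge0 // ltW.
have /andP[lo hi] := fine_integral_bounds mexp (expR_ge0 _) bounds.
apply/andP; split; last exact: ln_le0.
have pos : 0 < fine (\int[P]_x (expR (- (S x / n%:R)))%:E)%E.
  exact: lt_le_trans (expR_gt0 _) lo.
by rewrite -[X in X <= _]expRK ler_ln ?posrE ?expR_gt0.
Qed.

End ExpectationBounds.

Lemma dist_le_of_nonpos_bounded (R : realFieldType) (c x y : R) :
  - c <= x <= 0 -> - c <= y <= 0 -> `|x - y| <= c.
Proof. by move=> /andP[? ?] /andP[? ?]; rewrite ler_norml; apply/andP; split; lra. Qed.

Section OneCell.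
Variables (d : measure_display) (Mb : measurableType d) (R : realType).
Variables (S : G Mb R -> R) (n : nat) (s : R).
Hypotheses (mS : measurable_fun setT S) (n0 : (0 < n)%N).
Hypothesis S_bounded : forall g, 0 <= S g <= s.
Variables (Q : probability (G Mb R) R) (A : set Mb).
Variable kappa : G Mb R -> probability (G Mb R) R.
Hypotheses (mA : measurable A) (kappa_rcd : is_rcd Q A kappa).

Let cell_term (g : G Mb R) := ln (Eexp (kappa (restr A g)) S n).

Lemma cell_term_null_agree (g g' : G Mb R) :
  g A = 0%E -> g' A = 0%E -> cell_term g = cell_term g'.
Proof.
move=> gA0 g'A0; rewrite /cell_term /Eexp; congr (ln (fine _)).
apply: eq_measure_integral => B mB _.
apply: (kernel_G_agree kappa_rcd.1) => // C mC.
exact: restr_null_agree.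
Qed.

Lemma cell_term_diff_le (g g' : G Mb R) :
  n%:R * `|cell_term g - cell_term g'| <= s * (fine (g A) + fine (g' A)).
Proof.
have [m gA] := gm_int g mA; have [m' g'A] := gm_int g' mA.
rewrite gA g'A /= -natrD.
have [/eqP|mm'] := posnP (m + m').
  rewrite addn_eq0 => /andP[/eqP m0 /eqP m'0].
  have -> : cell_term g = cell_term g'.
    by apply: cell_term_null_agree; rewrite ?gA ?g'A ?m0 ?m'0.
  by rewrite subrr normr0 mulr0 m0 m'0 addn0 mulr0.
have n0R : 0 < n%:R :> R by rewrite ltr0n.
have s0 : 0 <= s by have /andP[] := S_bounded g; exact: le_trans.
apply: (@le_trans _ _ s); last by rewrite -{1}(mulr1 s) ler_wpM2l // ler1n.
rewrite mulrC -ler_pdivlMr //.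
by apply: dist_le_of_nonpos_bounded; exact: ln_expectation_expR_bounds.
Qed.

End OneCell.

Lemma Shat_sub (d : measure_display) (Mb : measurableType d) (R : realType)
  (S : G Mb R -> R) (n : nat) (Q : probability (G Mb R) R) (k : nat)
  (As : 'I_k -> set Mb) (kappa : 'I_k -> G Mb R -> probability (G Mb R) R)
  (g g' : G Mb R) :
  Shat S n Q As kappa g - Shat S n Q As kappa g' =
  - n%:R * \sum_(i < k) (ln (Eexp (kappa i (restr (As i) g)) S n)
                         - ln (Eexp (kappa i (restr (As i) g')) S n)).
Proof.
rewrite /Shat -mulrBr -sumrB; congr (_ * _); apply: eq_bigr => i _.
by rewrite opprB addrA subrK.
Qed.

Theorem lemma7p3 (R : realType) (M : completePseudoMetricType R)
  (hM_metric : hausdorff_space M) (hM_sep : separable_space M)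
  (S : G (borelType M) R -> R)
  (hS_pos : forall g, 0 <= S g)
  (hS_meas : measurable_fun setT S)
  (n : nat) (hn : (0 < n)%N)
  (hS_bdd : has_ubound (range S))
  (Q : probability (G (borelType M) R) R)
  (k : nat) (As : 'I_k -> set (borelType M))
  (hA_meas : forall i, measurable (As i))
  (hA_ne : forall i, As i !=set0)
  (hA_disj : forall i j, i != j -> As i `&` As j = set0)
  (hA_cover : \bigcup_i As i = setT)
  (kappa : 'I_k -> G (borelType M) R -> probability (G (borelType M) R) R)
  (hkappa : forall i, is_rcd Q (As i) (kappa i))
  (g g' : G (borelType M) R) :
  `| Shat S n Q As kappa g - Shat S n Q As kappa g' |
    <= sup (range S) * fine ((g setT + g' setT)%E).
Proof.
set s := sup (range S).
have S_bounded x : 0 <= S x <= s.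
  by rewrite hS_pos /=; apply: ub_le_sup => //; exists x.
rewrite Shat_sub normrM normrN normr_nat.
apply: le_trans (ler_wpM2l (ler0n _ _) (ler_norm_sum _ _ _)) _.
rewrite mulr_sumr.
apply: le_trans (ler_sum _ (fun i _ =>
  cell_term_diff_le hS_meas hn S_bounded (hA_meas i) (hkappa i) g g')) _.
have fin (h : G (borelType M) R) : h setT \is a fin_num.
  by have [m ->] := gm_int h measurableT.
by rewrite -mulr_sumr big_split /= -!fine_gmeas_partition // fineD.
Qed.
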